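(* Let $X$, $Y$ be metrizable spaces with $Y$ separable. For every nonzero countable ordinal $\xi$, if there is a sequence of $\mathbf{\Delta}^0_\xi$-functions from $X$ to $Y$ converging pointwise to $f:X\to Y$, then $f$ is of Baire class $\xi$. Conversely, if $\xi>1$ and $f: X\to Y$ is of Baire class $\xi$, then there is a sequence of $\mathbf{\Delta}^0_\xi$-functions from $X$ to $Y$ converging pointwise to $f$.
   Context: Work in ZF plus countable choice over the reals. For metrizable $X,Y$: $f:X\to Y$ is of Baire class $1$ if $f^{-1}(U)\in\mathbf{\Sigma}^0_2(X)$ for every open $U\subseteq Y$; for $1<\xi<\omega_1$, $f$ is of Baire class $\xi$ if it is the pointwise limit of a sequence of functions $f_n:X\to Y$ each of Baire class $\xi_n$ for some $1\le\xi_n<\xi$. For a nonzero countable ordinal $\eta$, $g:X\to Y$ is a $\mathbf{\Delta}^0_\eta$-function if $g^{-1}(A)\in\mathbf{\Sigma}^0_\eta(X)$ for every $A\in\mathbf{\Sigma}^0_\eta(Y)$. *)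

From HB Require Import structures.
From mathcomp Require Import all_boot all_order all_algebra.
From mathcomp Require Import all_classical all_reals all_analysis.

Set Implicit Arguments.
Unset Strict Implicit.
Unset Printing Implicit Defensive.

Import Order.TTheory GRing.Theory Num.Theory.

Local Open Scope classical_set_scope.

(** * Countable ordinals as Brouwer trees.
    [OZ] denotes 0, [OS a] denotes a+1 and [OL f] denotes sup_n (f n).
    Every countable ordinal is denoted by some tree (possibly many).       *)
Inductive cord : Type :=
| OZ : cord
| OS : cord -> cord
| OL : (nat -> cord) -> cord.

Inductive cord_le : cord -> cord -> Prop :=
| cord_le_Z b : cord_le OZ b
| cord_le_SS a b : cord_le a b -> cord_le (OS a) (OS b)
| cord_le_S a b : cord_le a b -> cord_le a (OS b)
| cord_le_Lr a f n : cord_le a (f n) -> cord_le a (OL f)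
| cord_le_Ll f b : (forall n, cord_le (f n) b) -> cord_le (OL f) b.

Definition cord_lt (a b : cord) : Prop := cord_le (OS a) b.

Definition cord1 : cord := OS OZ.

(** Sigma^0_1 = open sets; for xi > 1, Sigma^0_xi consists of the countable
    unions of sets whose complements are in Sigma^0_(xi_n), 1 <= xi_n < xi.
    (Open sets are kept in every Sigma^0_xi, xi >= 1: for metrizable spaces
    this agrees with the usual definition, since open sets are F_sigma.)   *)
Inductive Sigma0 {T : topologicalType} : cord -> set T -> Prop :=
| Sigma0_open xi A : cord_le cord1 xi -> open A -> Sigma0 xi A
| Sigma0_union xi (A : nat -> set T) (eta : nat -> cord) :
    (forall n, cord_le cord1 (eta n)) ->
    (forall n, cord_lt (eta n) xi) ->
    (forall n, Sigma0 (eta n) (~` A n)) ->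
    Sigma0 xi (\bigcup_n A n).

Definition pointwise_cvg {X Y : topologicalType} (g : nat -> X -> Y)
  (f : X -> Y) : Prop :=
  forall x, (fun n => g n x) @ \oo --> f x.

Inductive BaireClass {X Y : topologicalType} : cord -> (X -> Y) -> Prop :=
| Baire1 xi (f : X -> Y) :
    cord_le xi cord1 -> cord_le cord1 xi ->
    (forall U : set Y, open U -> Sigma0 (OS cord1) (f @^-1` U)) ->
    BaireClass xi f
| BaireLim xi (f : X -> Y) (g : nat -> X -> Y) (eta : nat -> cord) :
    cord_lt cord1 xi ->
    (forall n, cord_le cord1 (eta n)) ->
    (forall n, cord_lt (eta n) xi) ->
    (forall n, BaireClass (eta n) (g n)) ->
    pointwise_cvg g f ->
    BaireClass xi f.

Definition Delta0_fun {X Y : topologicalType} (eta : cord) (g : X -> Y) : Prop :=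
  forall A : set Y, Sigma0 eta A -> Sigma0 eta (g @^-1` A).

Definition separable_space (T : topologicalType) : Prop :=
  exists D : set T, countable D /\ dense D.

From HB Require Import structures.
From mathcomp Require Import all_boot all_order all_algebra.
From mathcomp Require Import all_classical all_reals all_analysis.
From mathcomp Require Import lra.

Set Implicit Arguments.
Unset Strict Implicit.
Unset Printing Implicit Defensive.

Import Order.TTheory GRing.Theory Num.Theory.
Local Open Scope classical_set_scope.

(* Both directions go through the Lebesgue-Hausdorff characterisation: for
   ξ >= 1, f is of Baire class ξ iff f⁻¹(U) is Σ⁰_(ξ+1) for every open U.
   If g_n -> f pointwise and each g_n⁻¹(V) is Σ⁰_ξ, then
   f⁻¹(U) = ⋃_k ⋃_m ⋂_n g_(n+m)⁻¹(F_k) with F_k = {y | B(y, 1/(k+1)) ⊆ U} closed.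
   Conversely, for ξ > 1 and d dense in Y, write f⁻¹(B(d_i, 1/(k+1))) as
   ⋃_m ⋂_j E(k,i,m,j) with every E(k,i,m,j) of class below ξ.  The n-th
   approximation only tests x against the sets with indices <= n, so it is a
   function of finitely many Δ⁰_(η+1) sets, η < ξ, hence of Baire class η by
   induction; it converges to f because, at each fixed level k, the least index
   passing all the tests eventually stabilises. *)

Lemma cord_le_refl a : cord_le a a.
Proof.
elim: a => [|a IH|f IH]; first exact: cord_le_Z.
- exact: cord_le_SS.
- by apply: cord_le_Ll => n; apply: (cord_le_Lr (IH n)).
Qed.

Lemma cord_leS a : cord_le a (OS a).
Proof. exact/cord_le_S/cord_le_refl. Qed.

Lemma cord_ltW a b : cord_lt a b -> cord_le a b.
Proof.
rewrite /cord_lt => H; remember (OS a) as a' eqn:Ea'.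
elim: H a Ea' => [//|a0 b0 ? _ a [<-]|a0 b0 _ IH a Ea|a0 f n _ IH a Ea|//].
- exact: cord_le_S.
- exact/cord_le_S/IH.
- exact/(cord_le_Lr (n := n))/IH.
Qed.

Lemma cord_le_OL f n c : cord_le (OL f) c -> cord_le (f n) c.
Proof.
move=> H; remember (OL f) as f' eqn:Ef'.
elim: H f Ef' => [//|//|a b _ IH f Ef|a g m _ IH f Ef|g b H _ f [<-]//].
- exact/cord_le_S/IH.
- exact/(cord_le_Lr (n := m))/IH.
Qed.

Lemma cord_le_trans a b c : cord_le a b -> cord_le b c -> cord_le a c.
Proof.
move=> H; elim: H c => {a b} [b c _|a b _ IH c|a b _ IH c|a f n _ IH c|f b _ IH c].
- exact: cord_le_Z.
- move=> Hc; remember (OS b) as b' eqn:Eb'; elim: Hc b Eb' IH => //.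
  + by move=> a0 b0 H0 _ b [<-] IH; apply/cord_le_SS/IH.
  + by move=> a0 b0 _ IH0 b Eb IH; apply: cord_le_S; apply: IH0 Eb IH.
  + by move=> a0 f n _ IH0 b Eb IH; apply: (cord_le_Lr (n := n)); apply: IH0 Eb IH.
- by move=> Hc; apply: IH; apply: cord_ltW.
- by move=> Hc; apply: IH; apply: cord_le_OL Hc.
- by move=> Hc; apply: cord_le_Ll => n; apply: IH.
Qed.

Lemma cord_lt_succ a b : cord_lt a (OS b) -> cord_le a b.
Proof. by move=> H; inversion H; subst => //; apply: cord_ltW. Qed.

Lemma cord_lt_le_trans a b c : cord_lt a b -> cord_le b c -> cord_lt a c.
Proof. exact: cord_le_trans. Qed.

Lemma cord_le_lt_trans a b c : cord_le a b -> cord_lt b c -> cord_lt a c.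
Proof. by move=> ab; apply/cord_le_trans/cord_le_SS. Qed.

Lemma cord_le_total a b : cord_le a b \/ cord_lt b a.
Proof.
elim: a b => [|a IHa|g IHg] b; first by left; apply: cord_le_Z.
- elim: b => [|b IHb|h IHh].
  + by right; apply/cord_le_SS/cord_le_Z.
  + case: IHb => [|/cord_lt_succ ba]; first by left; apply: cord_le_S.
    by case: (IHa b) => H; [left | right]; apply: cord_le_SS.
  + have [[n Hn]|Hn] := pselect (exists n, cord_le (OS a) (h n)).
      by left; apply: (cord_le_Lr (n := n)).
    right; apply/cord_le_SS/cord_le_Ll => n.
    by case: (IHh n) => [H|/cord_lt_succ//]; exfalso; apply: Hn; exists n.
- have [H|/existsNP[n Hn]] := pselect (forall n, cord_le (g n) b).
    by left; apply: cord_le_Ll.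
  by case: (IHg n b) => // H; right; apply: (cord_le_Lr (n := n)).
Qed.

Lemma cord_lt_wf : well_founded cord_lt.
Proof.
suff below a c : cord_le c a -> Acc cord_lt c.
  by move=> a; apply: (below a); apply: cord_le_refl.
elim: a c => [|a IH|f IH] c ca; constructor => d dc; have := cord_le_trans dc ca.
- by move=> H; inversion H.
- by move/cord_lt_succ; apply: IH.
- by move=> H; inversion H; subst; apply: (IH n); apply: cord_ltW.
Qed.

Lemma cord_lt_ub a b c : cord_lt a c -> cord_lt b c ->
  exists d, [/\ cord_le a d, cord_le b d & cord_lt d c].
Proof.
move=> ac bc; case: (cord_le_total a b) => H.
- by exists b; split=> //; apply: cord_le_refl.
- by exists a; split=> //; [apply: cord_le_refl | apply: cord_ltW].
Qed.

Section Sigma0_topology.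
Variable T : topologicalType.
Implicit Types (A E : set T) (xi : cord).

Definition Sigma0_below xi E :=
  exists eta, [/\ cord_le cord1 eta, cord_lt eta xi & Sigma0 eta E].

Lemma Sigma0_ge1 xi A : Sigma0 xi A -> cord_le cord1 xi.
Proof.
by case=> // {}xi B eta e1 exi _; apply: cord_le_trans (e1 0%N) (cord_ltW _).
Qed.

Lemma Sigma0_le a b A : cord_le a b -> Sigma0 a A -> Sigma0 b A.
Proof.
move=> + HA; case: HA => {A a} [a A a1 oA ab|a B eta e1 ea HB ab].
- by apply: Sigma0_open oA; apply: cord_le_trans ab.
- by apply: (Sigma0_union (eta := eta)) => // n; apply: cord_lt_le_trans ab.
Qed.

Lemma Sigma0_le1_open xi A : cord_le xi cord1 -> Sigma0 xi A -> open A.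
Proof.
move=> + HA; case: HA => // {}xi B eta e1 exi _ xi1.
have := cord_lt_succ (cord_lt_le_trans (cord_le_lt_trans (e1 0%N) (exi 0%N)) xi1).
by move=> H; inversion H.
Qed.

Lemma Sigma0_bigcup_below xi (B : nat -> set T) : cord_le cord1 xi ->
  (forall n, Sigma0_below xi (~` B n)) -> Sigma0 xi (\bigcup_n B n).
Proof.
move=> xi1 /choice[eta Heta].
by apply: (Sigma0_union (eta := eta)) => n; case: (Heta n).
Qed.

Lemma Sigma0_belowW xi E : Sigma0_below xi E -> Sigma0 xi E.
Proof. by case=> eta [_ /cord_ltW ex]; apply: Sigma0_le. Qed.

Lemma Sigma0_belowC xi E : Sigma0_below xi E -> Sigma0 xi (~` E).
Proof.
move=> [eta [e1 exi HE]].
rewrite -(bigcup_const (P := [set: nat]) (~` E)); last by exists 0%N.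
apply: Sigma0_bigcup_below => [|_]; last by rewrite setCK; exists eta.
exact/(cord_le_trans e1)/cord_ltW.
Qed.

Lemma Sigma0_below_seq (I : eqType) xi (E : I -> set T) (s : seq I) :
  cord_lt cord1 xi ->
  (forall i, i \in s -> Sigma0_below xi (E i)) ->
  exists eta, [/\ cord_le cord1 eta, cord_lt eta xi &
    forall i, i \in s -> Sigma0 eta (E i)].
Proof.
move=> xi1; elim: s => [|i s IH] HE.
  by exists cord1; split=> //; apply: cord_le_refl.
have [|eta [e1 exi Hs]] := IH; first by move=> j js; apply: HE; rewrite inE js orbT.
have [e [_ ie Hi]] := HE i (mem_head _ _).
have [d [ed ied dxi]] := cord_lt_ub exi ie.
exists d; split=> [||j] //; first exact: cord_le_trans e1 ed.
rewrite inE => /orP[/eqP -> | js]; first exact: Sigma0_le ied Hi.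
exact: Sigma0_le ed (Hs j js).
Qed.

End Sigma0_topology.

Definition invSn {R : realType} (n : nat) : R := (n.+1%:R)^-1.

Lemma invSn_gt0 {R : realType} n : (0 < @invSn R n)%R.
Proof. by rewrite /invSn invr_gt0 ltr0n. Qed.

Lemma invSn_le {R : realType} m n : (m <= n)%N -> (@invSn R n <= invSn m)%R.
Proof. by move=> mn; rewrite /invSn lef_pV2 ?posrE ?ltr0n // ler_nat ltnS. Qed.

Lemma invSn_lt {R : realType} (e : R) : (0 < e)%R -> exists n, (invSn n < e)%R.
Proof.
move=> e0; have [N _ HN] := near_infty_natSinv_lt (PosNum e0).
by exists N; apply: HN => /=.
Qed.

Definition unpair (p : nat) : nat * nat := odflt (0%N, 0%N) (unpickle p).

Lemma unpairK : cancel pickle unpair.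
Proof. by move=> q; rewrite /unpair pickleK. Qed.

Lemma bigcup_unpair (T : Type) (B : nat -> nat -> set T) :
  \bigcup_n \bigcup_m B n m = \bigcup_p B (unpair p).1 (unpair p).2.
Proof.
apply/seteqP; split=> x.
- by case=> n _ [m _ H]; exists (pickle (n, m)) => //; rewrite unpairK.
- by case=> p _ H; exists (unpair p).1 => //; exists (unpair p).2.
Qed.

Section Sigma0_metric.
Variables (R : realType) (T : metricType R).
Implicit Types (A E : set T) (xi : cord).
Local Open Scope ring_scope.

Lemma mball_open (x : T) r : open (ball x r).
Proof.
rewrite openE => y; rewrite /= ballEmdist /= => xy; apply/nbhs_ballP.
exists ((r - mdist x y) / 2); first by rewrite /= divr_gt0 // subr_gt0.
move=> z; rewrite /= !ballEmdist /= => yz.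
have := metric_triangle x y z; have := mdist_ge0 x y; have := mdist_ge0 y z.
by move: xy yz; lra.
Qed.

Lemma closed_ball_subset (U : set T) r : closed [set y | ball y r `<=` U].
Proof.
rewrite -openC.
have -> : ~` [set y | ball y r `<=` U] = \bigcup_(z in ~` U) ball z r.
  apply/seteqP; split=> x /=.
  - by move=> /existsNP[z /not_implyP[xz nUz]]; exists z => //; apply: ball_sym.
  - by case=> z nUz zx H; apply/nUz/H/ball_sym.
by apply: bigcup_open => z _; apply: mball_open.
Qed.

Lemma open_Fsigma A : open A ->
  exists C : nat -> set T, A = \bigcup_n C n /\ forall n, closed (C n).
Proof.
move=> oA; exists (fun n => [set x | ball x (invSn n) `<=` A]).
split; last by move=> n; apply: closed_ball_subset.
apply/seteqP; split=> [x Ax|x [n _ /= H]]; last exact/H/ballxx/invSn_gt0.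
have /nbhs_ballP[e e0 He] : nbhs x A by apply: open_nbhs_nbhs.
have [n Hn] := invSn_lt e0; exists n => // z xz.
exact/He/(le_ball (ltW Hn)).
Qed.

Lemma Sigma0_gt1_decomp xi A : cord_lt cord1 xi -> Sigma0 xi A ->
  exists B : nat -> set T, A = \bigcup_n B n /\ forall n, Sigma0_below xi (~` B n).
Proof.
move=> + HA; case: HA => {A} [{}xi A _ oA xi1|{}xi B eta e1 exi HB _].
- have [C [-> HC]] := open_Fsigma oA; exists C; split=> // n.
  exists cord1; split=> //; first exact: cord_le_refl.
  by apply: Sigma0_open; [apply: cord_le_refl | apply: closed_openC].
- by exists B; split=> // n; exists (eta n).
Qed.

Lemma Sigma0_bigcup xi (A : nat -> set T) : cord_le cord1 xi ->
  (forall n, Sigma0 xi (A n)) -> Sigma0 xi (\bigcup_n A n).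
Proof.
move=> xi1 HA; have [xi_le1|xi_gt1] := cord_le_total xi cord1.
  apply: Sigma0_open => //; apply: bigcup_open => n _.
  exact: Sigma0_le1_open xi_le1 (HA n).
have /choice[B HB] := fun n => Sigma0_gt1_decomp xi_gt1 (HA n).
have -> : \bigcup_n A n = \bigcup_n \bigcup_m B n m.
  by apply: eq_bigcupr => n _; case: (HB n).
rewrite bigcup_unpair; apply: Sigma0_bigcup_below => // p.
by case: (HB (unpair p).1).
Qed.

Lemma Sigma0_setU xi A A' : Sigma0 xi A -> Sigma0 xi A' -> Sigma0 xi (A `|` A').
Proof.
move=> HA HA'; rewrite -bigcup2E; apply: Sigma0_bigcup => [|[|[|n]]] //=.
- exact: Sigma0_ge1 HA.
- by apply: Sigma0_open; [apply: Sigma0_ge1 HA | apply: open0].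
Qed.

Lemma Sigma0_setI xi A A' : Sigma0 xi A -> Sigma0 xi A' -> Sigma0 xi (A `&` A').
Proof.
move=> HA HA'; have xi1 := Sigma0_ge1 HA.
have [xi_le1|xi_gt1] := cord_le_total xi cord1.
  by apply: Sigma0_open => //; apply: openI; apply: Sigma0_le1_open xi_le1 _.
have [B [-> HB]] := Sigma0_gt1_decomp xi_gt1 HA.
have [B' [-> HB']] := Sigma0_gt1_decomp xi_gt1 HA'.
rewrite setI_bigcupl; under eq_bigcupr do rewrite setI_bigcupr.
rewrite bigcup_unpair; apply: Sigma0_bigcup_below => // p.
have [e [e1 exi He]] := HB (unpair p).1.
have [e' [_ e'xi He']] := HB' (unpair p).2.
have [d [ed e'd dxi]] := cord_lt_ub exi e'xi.
exists d; split=> //; first exact: cord_le_trans e1 ed.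
rewrite setCI; apply: Sigma0_setU; first exact: Sigma0_le ed He.
exact: Sigma0_le e'd He'.
Qed.

Definition Delta0 xi A := Sigma0 xi A /\ Sigma0 xi (~` A).

Lemma Delta0_setT xi : cord_le cord1 xi -> Delta0 xi [set: T].
Proof.
by move=> xi1; rewrite /Delta0 setCT; split; apply: Sigma0_open => //;
  [apply: openT | apply: open0].
Qed.

Lemma Delta0_setC xi A : Delta0 xi A -> Delta0 xi (~` A).
Proof. by case=> HA HAC; split; rewrite ?setCK. Qed.

Lemma Delta0_ite xi E A B : Delta0 xi E -> Delta0 xi A -> Delta0 xi B ->
  Delta0 xi ((E `&` A) `|` (~` E `&` B)).
Proof.
move=> [E1 E2] [A1 A2] [B1 B2]; split; first by apply: Sigma0_setU; apply: Sigma0_setI.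
have -> : ~` ((E `&` A) `|` (~` E `&` B)) = (E `&` ~` A) `|` (~` E `&` ~` B).
  apply/seteqP; split=> x /=.
  - move=> H; have [Ex|nEx] := pselect (E x); [left | right]; split=> // Hx.
    + by apply: H; left.
    + by apply: H; right.
  - by case=> -[H1 H2] [] [].
by apply: Sigma0_setU; apply: Sigma0_setI.
Qed.

Lemma Sigma0_below_Delta0 xi E : Sigma0_below xi E -> Delta0 xi E.
Proof. by move=> H; split; [apply: Sigma0_belowW | apply: Sigma0_belowC]. Qed.

Lemma Sigma0_succ_decomp xi S : cord_lt cord1 xi -> Sigma0 (OS xi) S ->
  exists E : nat -> nat -> set T,
    S = \bigcup_m \bigcap_j E m j /\ forall m j, Sigma0_below xi (E m j).
Proof.
move=> xi_gt1 HS.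
have [A [-> HA]] : exists A : nat -> set T,
    S = \bigcup_m A m /\ forall m, Sigma0 xi (~` A m).
  have [B [-> HB]] := Sigma0_gt1_decomp (cord_lt_le_trans xi_gt1 (cord_leS xi)) HS.
  exists B; split=> // m; have [e [_ /cord_lt_succ exi He]] := HB m.
  exact: Sigma0_le exi He.
have /choice[B HB] := fun m => Sigma0_gt1_decomp xi_gt1 (HA m).
exists (fun m j => ~` B m j); split=> [|m j]; last by case: (HB m).
apply: eq_bigcupr => m _; rewrite -setC_bigcup -(HB m).1.
by rewrite setCK.
Qed.

Lemma Delta0_preimage_bits (I : eqType) (Z : Type) xi (E : I -> set T)
    (s : seq I) (Phi : (I -> bool) -> Z) :
  cord_le cord1 xi -> (forall i, i \in s -> Delta0 xi (E i)) ->
  (forall b b', {in s, b =1 b'} -> Phi b = Phi b') ->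
  forall S : set Z, Delta0 xi [set x | S (Phi (fun i => `[< E i x >]))].
Proof.
move=> xi1; elim: s Phi => [|i s IH] Phi HE HPhi S.
  have Phi_const x : Phi (fun i => `[< E i x >]) = Phi xpred0 by apply: HPhi.
  have [SPhi|nSPhi] := pselect (S (Phi xpred0)).
    have -> : [set x | S (Phi (fun i => `[< E i x >]))] = setT.
      by apply/seteqP; split=> x //= _; rewrite Phi_const.
    exact: Delta0_setT.
  have -> : [set x | S (Phi (fun i => `[< E i x >]))] = ~` setT.
    by apply/seteqP; split=> x /=; rewrite Phi_const.
  exact/Delta0_setC/Delta0_setT.
pose upd (b : I -> bool) v := fun j => if j == i then v else b j.
have upd_bits x :
    upd (fun j => `[< E j x >]) `[< E i x >] = (fun j => `[< E j x >]).
  by apply/funext => j; rewrite /upd; case: eqP => [->|].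
have HPhi_upd v b b' : {in s, b =1 b'} -> Phi (upd b v) = Phi (upd b' v).
  move=> bb'; apply: HPhi => j; rewrite inE /upd.
  by case: eqP => //= _ js; apply: bb'.
have HEs j : j \in s -> Delta0 xi (E j).
  by move=> js; apply: HE; rewrite inE js orbT.
have -> : [set x | S (Phi (fun j => `[< E j x >]))] =
    (E i `&` [set x | S (Phi (upd (fun j => `[< E j x >]) true))]) `|`
    (~` E i `&` [set x | S (Phi (upd (fun j => `[< E j x >]) false))]).
  apply/seteqP; split=> x /=; have := upd_bits x.
  - have [Eix|nEix] := pselect (E i x);
      [rewrite asboolT // | rewrite asboolF //] => ->.
    + by move=> HS; left.
    + by move=> HS; right.
  - by move=> + [[Eix]|[nEix]]; [rewrite asboolT // | rewrite asboolF //] => ->.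
apply: Delta0_ite; first by apply: HE; apply: mem_head.
- by apply: (IH (fun b => Phi (upd b true)) HEs) => b b'; apply: HPhi_upd.
- by apply: (IH (fun b => Phi (upd b false)) HEs) => b b'; apply: HPhi_upd.
Qed.

End Sigma0_metric.

Section Preimages.
Variables (R : realType) (X Y : metricType R).
Local Open Scope ring_scope.

Lemma Sigma0_preimage_cvg xi (g : nat -> X -> Y) (f : X -> Y) :
  cord_le cord1 xi -> (forall n V, open V -> Sigma0 xi (g n @^-1` V)) ->
  pointwise_cvg g f -> forall U, open U -> Sigma0 (OS xi) (f @^-1` U).
Proof.
move=> xi1 Hg gf U oU.
have Sxi1 : cord_le cord1 (OS xi) := cord_le_trans xi1 (cord_leS xi).
pose F k := [set y : Y | ball y (invSn k) `<=` U].
pose P k m := [set x : X | forall n, F k (g (n + m)%N x)].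
have -> : f @^-1` U = \bigcup_k \bigcup_m P k m.
  apply/seteqP; split=> x /=.
  - move=> Ux; have /nbhs_ballP[e e0 He] : nbhs (f x) U by apply: open_nbhs_nbhs.
    have [k Hk] := invSn_lt (divr_gt0 e0 (ltr0n R 2)).
    have /cvg_ballP/(_ _ (invSn_gt0 k))[N _ HN] := gf x.
    exists k => //; exists N => // n z Hz; apply: He.
    apply: (le_ball (e1 := invSn k + invSn k)); first by move: Hk; lra.
    by apply: ball_triangle Hz; apply: HN; rewrite /= leq_addl.
  - case=> k _ [m _ Pkm]; have /cvg_ballP/(_ _ (invSn_gt0 k))[N _ HN] := gf x.
    by apply: (Pkm N); apply/ball_sym/HN; rewrite /= leq_addr.
apply: Sigma0_bigcup => // k; apply: Sigma0_bigcup_below => // m.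
exists xi; split=> //; first exact: cord_le_refl.
have -> : ~` P k m = \bigcup_n (g (n + m)%N @^-1` (~` F k)).
  apply/seteqP; split=> x /=; last by case=> n _ nF Px; apply/nF/Px.
  by move=> /existsNP[n nF]; exists n.
apply: Sigma0_bigcup => // n.
by apply: Hg; apply: closed_openC; apply: closed_ball_subset.
Qed.

Lemma BaireClass_Sigma0_preimage xi (f : X -> Y) : BaireClass xi f ->
  cord_le cord1 xi /\ forall U, open U -> Sigma0 (OS xi) (f @^-1` U).
Proof.
elim=> {xi f} [xi f _ xi1 Hf|xi f g eta xi_gt1 e1 exi _ IH gf].
- by split=> // U oU; apply: Sigma0_le (cord_le_SS xi1) (Hf U oU).
- split; first exact: cord_ltW.
  apply: Sigma0_preimage_cvg gf; first exact: cord_ltW.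
  by move=> n V oV; apply: Sigma0_le (exi n) ((IH n).2 V oV).
Qed.

End Preimages.

Definition natmin (P : set nat) : nat :=
  xget 0%N [set p | P p /\ forall q, P q -> (p <= q)%N].

Lemma natminP (P : set nat) : (exists p, P p) ->
  P (natmin P) /\ forall q, P q -> (natmin P <= q)%N.
Proof.
move=> [p Pp].
apply: (xgetPex 0%N (P := [set p | P p /\ forall q, P q -> (p <= q)%N])).
have exP : exists p, `[< P p >] by exists p; apply/asboolP.
case: (ex_minnP exP) => m /asboolP Pm mmin.
by exists m; split=> // q Pq; apply/mmin/asboolP.
Qed.

Definition natmax_le (n : nat) (P : set nat) : nat :=
  xget 0%N [set k | ((k <= n)%N /\ P k) /\
    forall k', (k' <= n)%N -> P k' -> (k' <= k)%N].

Lemma natmax_leP n (P : set nat) : (exists k, (k <= n)%N /\ P k) ->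
  ((natmax_le n P <= n)%N /\ P (natmax_le n P)) /\
  forall k', (k' <= n)%N -> P k' -> (k' <= natmax_le n P)%N.
Proof.
move=> [k kP]; apply: (xgetPex 0%N (P := [set k | ((k <= n)%N /\ P k) /\
  forall k', (k' <= n)%N -> P k' -> (k' <= k)%N])).
have exP : exists k, `[< (k <= n)%N /\ P k >] by exists k; apply/asboolP.
have ubP i : `[< (i <= n)%N /\ P i >] -> (i <= n)%N by move=> /asboolP[].
case: (ex_maxnP exP ubP) => m /asboolP Pm mmax.
by exists m; split=> // k' k'n Pk'; apply/mmax/asboolP.
Qed.

Section Selection.
Variables (R : realType) (Y : metricType R) (y0 : Y) (c : nat -> nat -> Y).
Local Open Scope ring_scope.
Implicit Types (C : nat -> nat -> Prop) (n K : nat).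

Definition consistent C K := forall l, (l <= K)%N -> (exists p, C l p) /\
  forall l', (l' <= K)%N ->
    ball (c l (natmin (C l))) (invSn l + invSn l') (c l' (natmin (C l'))).

(* The selected level is the largest [K <= n] up to which the least candidates
   are mutually consistent; once the least candidates at the levels [<= L] are
   the true ones, it is at least [L] and the output is within [3/(L+1)] of [y]. *)
Definition select C n : Y :=
  if `[< exists K, (K <= n)%N /\ consistent C K >] then
    let K := natmax_le n (consistent C) in c K (natmin (C K))
  else y0.

Variables (y : Y) (Cn : nat -> nat -> nat -> Prop) (Tr : nat -> nat -> Prop).
Hypothesis Tr_ball : forall k p, Tr k p -> ball (c k p) (invSn k) y.
Hypothesis Tr_ex : forall k, exists p, Tr k p.
Hypothesis Cn_eventually : forall k p, Tr k p -> \forall n \near \oo, Cn n k p.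
Hypothesis Cn_eventuallyN :
  forall k p, ~ Tr k p -> \forall n \near \oo, ~ Cn n k p.

Lemma natmin_Cn_eventually k :
  \forall n \near \oo, (exists p, Cn n k p) /\ natmin (Cn n k) = natmin (Tr k).
Proof.
have [Tp0 p0min] := natminP (Tr_ex k); set p0 := natmin (Tr k) in Tp0 p0min *.
have below : \forall n \near \oo, forall q : 'I_p0, ~ Cn n k q.
  apply: filter_forall => q; apply: Cn_eventuallyN => Tq.
  by have := p0min _ Tq; rewrite leqNgt ltn_ord.
near=> n; have Cp0 : Cn n k p0 by near: n; apply: Cn_eventually.
have below_n : forall q : 'I_p0, ~ Cn n k q by near: n.
split; first by exists p0.
have [Cq qmin] := natminP (ex_intro _ p0 Cp0).
apply/eqP; rewrite eqn_leq qmin //= leqNgt; apply/negP => lt_q_p0.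
exact: below_n (Ordinal lt_q_p0) Cq.
Unshelve. all: by end_near.
Qed.

Lemma select_cvg : select (Cn n) n @[n --> \oo] --> y.
Proof.
have Tr_pair l l' :
    ball (c l (natmin (Tr l))) (invSn l + invSn l') (c l' (natmin (Tr l'))).
  apply: ball_triangle (Tr_ball (natminP (Tr_ex l)).1) _.
  exact/ball_sym/Tr_ball/(natminP (Tr_ex l')).1.
apply/cvg_ballP => e e0.
have [L HL] := invSn_lt (divr_gt0 e0 (ltr0n R 3)).
have stable : \forall n \near \oo, forall l : 'I_L.+1,
    (exists p, Cn n l p) /\ natmin (Cn n l) = natmin (Tr l).
  by apply: filter_forall => l; apply: natmin_Cn_eventually.
near=> n.
have stable_n : forall l : 'I_L.+1,
    (exists p, Cn n l p) /\ natmin (Cn n l) = natmin (Tr l) by near: n.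
have Cn_L l : (l <= L)%N ->
    (exists p, Cn n l p) /\ natmin (Cn n l) = natmin (Tr l).
  by move=> lL; apply: (stable_n (Ordinal (lL : (l < L.+1)%N))).
have Ln : (L <= n)%N by near: n; apply: nbhs_infty_ge.
have consL : consistent (Cn n) L.
  move=> l lL; split=> [|l' l'L]; first exact: (Cn_L l lL).1.
  by rewrite (Cn_L l lL).2 (Cn_L l' l'L).2; apply: Tr_pair.
rewrite /select asboolT; last by exists L.
have [[Kn consK] Kmax] := natmax_leP (ex_intro _ L (conj Ln consL)).
set K := natmax_le n (consistent (Cn n)) in Kn consK Kmax *.
have LK : (L <= K)%N by apply: Kmax.
have := (consK L LK).2 K (leqnn K); rewrite (Cn_L L (leqnn L)).2.
move/(ball_triangle (ball_sym (Tr_ball (natminP (Tr_ex L)).1))); apply: le_ball.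
by have := @invSn_le R _ _ LK; have := @invSn_gt0 R L; move: HL; lra.
Unshelve. all: by end_near.
Qed.

End Selection.

Section Stage_approximation.
Variables (R : realType) (X Y : metricType R) (y0 : Y) (c : nat -> nat -> Y)
  (E : nat -> nat -> nat -> set X).
Local Open Scope ring_scope.

(* Bounding all indices by [n] makes [approx n] depend on finitely many of the
   sets [E k p j]. *)
Definition stage n (b : nat * nat * nat -> bool) k p :=
  [/\ (k <= n)%N, (p <= n)%N & forall j, (j <= n)%N -> b (k, p, j)].

Definition bits (x : X) (t : nat * nat * nat) : bool := `[< E t.1.1 t.1.2 t.2 x >].

Definition approx n x := select y0 c (stage n (bits x)) n.

Lemma approx_cvg (f : X -> Y) :
  (forall k p x, (forall j, E k p j x) -> ball (c k p) (invSn k) (f x)) ->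
  (forall k x, exists p, forall j, E k p j x) -> pointwise_cvg approx f.
Proof.
move=> E_ball E_cover x.
apply: (@select_cvg _ _ y0 c (f x) (fun n => stage n (bits x))
  (fun k p => forall j, E k p j x)) => [k p|k|k p Ekp|k p].
- exact: E_ball.
- exact: E_cover.
- near=> n; split=> [||j _]; last exact/asboolP/Ekp.
  + by near: n; apply: nbhs_infty_ge.
  + by near: n; apply: nbhs_infty_ge.
- move=> /existsNP[j nEkpj]; near=> n => -[_ _ /(_ j) Ekpj].
  apply/nEkpj/asboolP/Ekpj.
  by near: n; apply: nbhs_infty_ge.
Unshelve. all: by end_near.
Qed.

Lemma approx_Sigma0 xi : cord_lt cord1 xi ->
  (forall k p j, Sigma0_below xi (E k p j)) ->
  forall n, exists eta, [/\ cord_le cord1 eta, cord_lt eta xi &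
    forall S, Sigma0 (OS eta) (approx n @^-1` S)].
Proof.
move=> xi1 HE n.
pose idx := [seq (kp, j) | kp <- [seq (k, p) | k <- iota 0 n.+1,
  p <- iota 0 n.+1], j <- iota 0 n.+1].
have idxP k p j : (k <= n)%N -> (p <= n)%N -> (j <= n)%N -> (k, p, j) \in idx.
  move=> kn pn jn; apply: allpairs_f; last by rewrite mem_iota add0n ltnS.
  by apply: allpairs_f; rewrite mem_iota add0n ltnS.
pose E3 (t : nat * nat * nat) := E t.1.1 t.1.2 t.2.
have [eta [e1 exi HEeta]] :=
  Sigma0_below_seq (E := E3) (s := idx) xi1 (fun t _ => HE _ _ _).
exists eta; split=> // S.
have eta1 : cord_le cord1 (OS eta) := cord_le_trans e1 (cord_leS eta).
pose Phi b := select y0 c (stage n b) n.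
apply: (Delta0_preimage_bits (s := idx) (Phi := Phi) eta1 _ _ S).1.
- move=> t tidx; apply: Sigma0_below_Delta0; exists eta.
  by split=> //; [apply: cord_le_refl | apply: HEeta].
- move=> b b' bb'; rewrite /Phi; congr select; apply/funext => k; apply/funext => p.
  by apply/propext; split=> -[kn pn Hb]; split=> // j jn; move: (Hb j jn);
    rewrite bb' ?idxP.
Qed.

End Stage_approximation.

Section Approximation.
Variable R : realType.
Local Open Scope ring_scope.

Lemma separable_dense_seq (Y : metricType R) (y0 : Y) : separable_space Y ->
  exists d : nat -> Y, forall y e, 0 < e -> exists i, ball y e (d i).
Proof.
case=> D [/countable_injP[h hinj] dD].
exists (fun i => xget y0 [set z | D z /\ h z = i]) => y e e0.
have [z [yz Dz]] : (ball y e `&` D) !=set0.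
  by apply: dD; [exists y; apply: ballxx | apply: mball_open].
exists (h z); have [|Dw hwz] := xgetPex y0 (P := [set w | D w /\ h w = h z]).
  by exists z.
by rewrite (hinj _ _ _ _ hwz) ?inE.
Qed.

Lemma Sigma0_succ_cover (X Y : metricType R) xi (f : X -> Y) (d : nat -> Y)
    (r : R) :
  cord_lt cord1 xi -> (forall U, open U -> Sigma0 (OS xi) (f @^-1` U)) ->
  (forall y, exists i, ball y r (d i)) ->
  exists (a : nat -> Y) (E : nat -> nat -> set X),
    [/\ forall p j, Sigma0_below xi (E p j),
        forall p x, (forall j, E p j x) -> ball (a p) r (f x) &
        forall x, exists p, forall j, E p j x].
Proof.
move=> xi1 Hf d_cover.
have /choice[F HF] := fun i => Sigma0_succ_decomp xi1 (Hf _ (mball_open (d i) r)).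
exists (fun p => d (unpair p).1), (fun p => F (unpair p).1 (unpair p).2); split.
- by move=> p j; apply: (HF _).2.
- move=> p x Fx; suff : (f @^-1` ball (d (unpair p).1) r) x by [].
  by rewrite (HF _).1; exists (unpair p).2 => // j _; apply: Fx.
- move=> x; have [i /ball_sym dix] := d_cover (f x).
  have : (f @^-1` ball (d i) r) x by [].
  rewrite (HF i).1 => -[m _ Fm].
  by exists (pickle (i, m)) => j; rewrite unpairK; apply: Fm.
Qed.

Lemma Sigma0_succ_approx (X Y : metricType R) xi (f : X -> Y) :
  separable_space Y -> cord_lt cord1 xi ->
  (forall U, open U -> Sigma0 (OS xi) (f @^-1` U)) ->
  exists g : nat -> X -> Y, pointwise_cvg g f /\ forall n, exists eta,
    [/\ cord_le cord1 eta, cord_lt eta xi &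
      forall S, Sigma0 (OS eta) (g n @^-1` S)].
Proof.
move=> sepY xi1 Hf.
have [[x0 _]|nX] := pselect (exists x : X, True); last first.
  exists (fun _ => f); split=> [x|n]; first by exfalso; apply: nX; exists x.
  exists cord1; split=> // [|S]; first exact: cord_le_refl.
  rewrite (_ : _ @^-1` S = set0).
    by apply: Sigma0_open; [apply: cord_leS | apply: open0].
  by apply/seteqP; split=> x //= _; apply: nX; exists x.
have [d d_dense] := separable_dense_seq (f x0) sepY.
have /choice[c /choice[E HE]] := fun k =>
  Sigma0_succ_cover xi1 Hf (fun y => d_dense y _ (@invSn_gt0 R k)).
exists (approx (f x0) c E); split.
- by apply: approx_cvg => k; case: (HE k).
- by apply: approx_Sigma0 => // k; case: (HE k).
Qed.

End Approximation.

Lemma BaireClass_of_Sigma0_preimage (R : realType) (X Y : metricType R) :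
  separable_space Y -> forall xi (f : X -> Y), cord_le cord1 xi ->
  (forall U, open U -> Sigma0 (OS xi) (f @^-1` U)) -> BaireClass xi f.
Proof.
move=> sepY xi; elim/(well_founded_induction cord_lt_wf): xi => xi IH f xi1 Hf.
have [xi_le1|xi_gt1] := cord_le_total xi cord1.
  by apply: Baire1 => // U oU; apply: Sigma0_le (cord_le_SS xi_le1) (Hf U oU).
have [g [gf /choice[eta Heta]]] := Sigma0_succ_approx sepY xi_gt1 Hf.
apply: (BaireLim (g := g) (eta := eta)) => // n; case: (Heta n) => // e1 exi Hg.
by apply: IH => // U _; apply: Hg.
Qed.

Theorem mainTheorem6 (R : realType) (X Y : metricType R) :
  separable_space Y ->
  forall xi : cord, cord_le cord1 xi ->
  forall f : X -> Y,
    ((exists g : nat -> X -> Y,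
        (forall n, Delta0_fun xi (g n)) /\ pointwise_cvg g f) ->
     BaireClass xi f) /\
    (cord_lt cord1 xi -> BaireClass xi f ->
     exists g : nat -> X -> Y,
       (forall n, Delta0_fun xi (g n)) /\ pointwise_cvg g f).
Proof.
move=> sepY xi xi1 f; split.
- case=> g [g_Delta gf]; apply: BaireClass_of_Sigma0_preimage => //.
  apply: Sigma0_preimage_cvg gf => // n V oV.
  by apply: g_Delta; apply: Sigma0_open.
- move=> xi_gt1 /BaireClass_Sigma0_preimage[_ Hf].
  have [g [gf Hg]] := Sigma0_succ_approx sepY xi_gt1 Hf.
  exists g; split=> // n A _; have [eta [_ exi HS]] := Hg n.
  exact: Sigma0_le exi (HS A).
Qed.
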